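(* Let $X$ be a topological space and $a\in\mathscr{C}_{\mathrm{a.e.}}(X)$. Then there is a unique representative $a_{\max}\in a$ such that $f=a_{\max}|_{\operatorname{dom}f}$ for all $f\in a$. In particular $\operatorname{dom}a_{\max}\supseteq\operatorname{dom}f$ for all $f\in a$.
   Context: $\mathscr{C}_{\mathrm{a.e.}}(X)$: consider continuous real-valued functions $f$ defined on dense open subsets $\operatorname{dom}f$ of $X$; define $f+g$, $fg$ pointwise on $\operatorname{dom}f\cap\operatorname{dom}g$; $f\approx g$ iff $f|_A=g|_A$ for some dense open $A\subseteq\operatorname{dom}f\cap\operatorname{dom}g$. $\mathscr{C}_{\mathrm{a.e.}}(X)$ is the set of $\approx$-equivalence classes (each element $a$ is thus a set of such functions, its representatives). *)

From HB Require Import structures.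
From mathcomp Require Import all_boot all_order all_algebra.
From mathcomp Require Import all_classical all_reals all_analysis.
From mathcomp Require Import Rstruct Rstruct_topology.
From Stdlib Require Import Reals.
Set Implicit Arguments. Unset Strict Implicit. Unset Printing Implicit Defensive.
Local Open Scope classical_set_scope.

(* A partial real-valued function on X: f x = None means x is outside dom f.
   Values are in Stdlib's reals R (a realType via Rstruct). *)
Definition pfun (X : topologicalType) := X -> option R.

Definition dom (X : topologicalType) (f : pfun X) : set X :=
  [set x | f x <> None].

(* value on the domain (default 0 outside, irrelevant) *)
Definition pval (X : topologicalType) (f : pfun X) (x : X) : R :=
  match f x with Some r => r | None => 0%R end.

Definition is_pcf (X : topologicalType) (f : pfun X) : Prop :=
  open (dom f) /\ dense (dom f) /\ {within dom f, continuous (pval f)}.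

Definition approx (X : topologicalType) (f g : pfun X) : Prop :=
  exists A : set X, [/\ open A, dense A, A `<=` dom f `&` dom g &
    forall x, A x -> f x = g x].

Definition is_Cae (X : topologicalType) (a : set (pfun X)) : Prop :=
  exists f0, is_pcf f0 /\ a = [set g | is_pcf g /\ approx g f0].

Definition prestrict (X : topologicalType) (g : pfun X) (D : set X) : pfun X :=
  fun x => if `[< D x >] then g x else None.

From Pilot Require Import Defs.
From Stdlib Require Import Reals.
From mathcomp Require Import all_boot all_order all_algebra.
From mathcomp Require Import all_classical all_reals all_analysis.
From mathcomp Require Import Rstruct Rstruct_topology.
Set Implicit Arguments.
Local Open Scope classical_set_scope.

(* Two continuous real functions agreeing on a dense set agree wherever both
   are defined, R being Hausdorff; as any two representatives of [a] agree on a
   dense open set, they are pairwise compatible and glue to a function on the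
   union of their domains.  This union is open and dense, the glued function is
   continuous because near each point it coincides with a representative, and
   it agrees with every representative, so it lies in [a] and restricts to each
   of them.  Two representatives restricting to each other have the same domain,
   hence are equal, which gives uniqueness. *)

Lemma continuous_at_dense_eq (T U : topologicalType) (f g : T -> U) (A : set T) (x : T) :
  hausdorff_space U -> dense A -> (forall y, A y -> f y = g y) ->
  f @ x --> f x -> g @ x --> g x -> f x = g x.
Proof.
move=> hU dA fg fx gx; apply: hU => P Q Pfx Qgx.
have : nbhs x (f @^-1` P `&` g @^-1` Q) by apply: filterI; [exact: fx | exact: gx].
rewrite nbhsE => -[B [oB Bx] BPQ].
have [y [By Ay]] := dA B (ex_intro _ x Bx) oB.
have [Pfy Qgy] := BPQ y By.
by exists (f y); split; rewrite // fg.
Qed.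

Section PartialFunctions.
Variable X : topologicalType.
Implicit Types (f g : pfun X) (x : X).

Lemma Some_pval f x : dom f x -> f x = Some (pval f x).
Proof. by rewrite /dom /pval /=; case: (f x). Qed.

Lemma notin_dom f x : ~ dom f x -> f x = None.
Proof. by rewrite /dom /=; case: (f x) => // r nr; exfalso; apply: nr. Qed.

Lemma prestrict_dom f : prestrict f (dom f) = f.
Proof.
apply: funext => x; rewrite /prestrict.
by case: asboolP => // /notin_dom.
Qed.

Lemma dom_prestrict_sub f g : f = prestrict g (dom f) -> dom f `<=` dom g.
Proof. by move=> fE x; rewrite fE /dom /prestrict /=; case: asboolP. Qed.

Lemma prestrict_antisym f g :
  f = prestrict g (dom f) -> g = prestrict f (dom g) -> f = g.
Proof.
move=> fE gE; have /seteqP domE := conj (dom_prestrict_sub fE) (dom_prestrict_sub gE).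
by rewrite fE domE prestrict_dom.
Qed.

Lemma pcf_cvg f x : is_pcf f -> dom f x -> pval f @ x --> pval f x.
Proof.
move=> [oD [_ cf]] Dx.
by move: cf; rewrite continuous_open_subspace // => /(_ x); apply; rewrite inE.
Qed.

Lemma pcf_eq_dense f g (A : set X) : is_pcf f -> is_pcf g -> dense A ->
  (forall y, A y -> f y = g y) -> forall x, dom f x -> dom g x -> f x = g x.
Proof.
move=> pf pg dA fg x fx gx; rewrite (Some_pval fx) (Some_pval gx); congr Some.
apply: (@continuous_at_dense_eq _ R _ _ _ _ (@Rhausdorff R) dA _
  (pcf_cvg pf fx) (pcf_cvg pg gx)).
by move=> y Ay; rewrite /pval fg.
Qed.

(* Qualified: mathcomp-analysis also exports an [approx]. *)
Lemma approx_refl f : is_pcf f -> Defs.approx f f.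
Proof. by move=> [oD [dD _]]; exists (dom f); split => // x. Qed.

End PartialFunctions.

(* By [Cae_agree], the representative chosen at [x] does not matter. *)
Definition Cae_max (X : topologicalType) (a : set (pfun X)) : pfun X := fun x =>
  if pselect (exists f, a f /\ dom f x) is left H then projT1 (cid H) x else None.

Section CaeMax.
Variables (X : topologicalType) (a : set (pfun X)).
Hypothesis Ca : is_Cae a.
Implicit Types (f g : pfun X) (x : X).

Lemma Cae_pcf f : a f -> is_pcf f.
Proof. by have [f0 [_ ->]] := Ca; case. Qed.

Lemma Cae_neq0 : a !=set0.
Proof.
by have [f0 [pf0 aE]] := Ca; exists f0; rewrite aE; split => //; apply: approx_refl.
Qed.

Lemma Cae_agree f g : a f -> a g -> forall x, dom f x -> dom g x -> f x = g x.
Proof.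
have [f0 [_ ->]] := Ca => -[pf [A [oA dA _ fA]]] [pg [B [oB dB _ gB]]].
apply: (pcf_eq_dense pf pg (denseI oA dA dB)).
by move=> y [Ay By]; rewrite fA // gB.
Qed.

Lemma Cae_maxE f x : a f -> dom f x -> Cae_max a x = f x.
Proof.
move=> af fx; rewrite /Cae_max; case: pselect => [H|]; last by case; exists f.
by case: (cid H) => g [ag gx] /=; apply: Cae_agree.
Qed.

Lemma dom_Cae_max : dom (Cae_max a) = \bigcup_(f in a) dom f.
Proof.
apply/seteqP; split => x; last by move=> [f af fx]; rewrite /dom /= (Cae_maxE af fx).
by rewrite /dom /Cae_max /=; case: pselect => // -[f [af fx]] _; exists f.
Qed.

Lemma pcf_Cae_max : is_pcf (Cae_max a).
Proof.
have oD : open (dom (Cae_max a)).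
  by rewrite dom_Cae_max; apply: bigcup_open => f /Cae_pcf[].
split=> //; split.
  have [f0 af0] := Cae_neq0; have [_ [df0 _]] := Cae_pcf af0.
  move=> O O0 oO; have [y [Oy f0y]] := df0 O O0 oO.
  by exists y; split => //; rewrite dom_Cae_max; exists f0.
rewrite continuous_open_subspace // => x; rewrite inE dom_Cae_max => -[f af fx].
have [oDf _] := Cae_pcf af.
have near_eq : \forall y \near x, pval f y = pval (Cae_max a) y.
  by apply: filterS (open_nbhs_nbhs (conj oDf fx)) => y fy; rewrite /pval (Cae_maxE af fy).
rewrite /continuous_at -(nbhs_singleton near_eq).
exact: cvg_trans (near_eq_cvg near_eq) (pcf_cvg (Cae_pcf af) fx).
Qed.

Lemma Cae_max_in : a (Cae_max a).
Proof.
have [f0 af0] := Cae_neq0; have [f1 [_ aE]] := Ca.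
move: (af0); rewrite {1}aE => -[_ [A [oA dA A_sub A_eq]]].
rewrite {1}aE; split; first exact: pcf_Cae_max.
exists A; split => // x Ax; have [f0x f1x] := A_sub x Ax.
  by split => //; rewrite dom_Cae_max; exists f0.
by rewrite -A_eq // (Cae_maxE af0 f0x).
Qed.

Lemma prestrict_Cae_max f : a f -> f = prestrict (Cae_max a) (dom f).
Proof.
move=> af; apply: funext => x; rewrite /prestrict.
by case: asboolP => [fx|/notin_dom //]; rewrite (Cae_maxE af fx).
Qed.

End CaeMax.

Theorem proposition16 (X : topologicalType) (a : set (pfun X)) :
  is_Cae a ->
  (exists! amax : pfun X, a amax /\ forall f, a f -> f = prestrict amax (dom f)) /\
  (forall amax : pfun X, a amax -> (forall f, a f -> f = prestrict amax (dom f)) ->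
     forall f, a f -> dom f `<=` dom amax).
Proof.
move=> Ca; split; last by move=> b _ b_max f af; apply: dom_prestrict_sub; exact: b_max.
exists (Cae_max a); split; first by split; [exact: Cae_max_in | exact: prestrict_Cae_max].
move=> b [ab b_max]; apply: prestrict_antisym.
  exact: b_max (Cae_max_in Ca).
exact: prestrict_Cae_max.
Qed.
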